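(* Let $t\ge 1$, $k\ge t+1$, $v\ge 2$, $\lambda\ge1$. If an SSOA$_\lambda(t,k,v)$ exists, then a simple COA$_\lambda(t,k+t-1,v)$ exists. Explicitly, if $A_1,\dots,A_k$ are the columns of the SSOA, the array $(A_1,A_2,\dots,A_k,A_1,A_2,\dots,A_{t-1})$ is such a simple COA.
   Context: An orthogonal array OA$_\lambda(t,k,v)$ is a $\lambda v^t\times k$ array over a $v$-set $V$ such that every $N\times t$ subarray contains every $t$-tuple exactly $\lambda$ times as a row. It is super-simple, written SSOA$_\lambda(t,k,v)$, if any $t+1$ of its columns contain every $(t+1)$-tuple at most once as a row. A COA$_\lambda(t,k,v)$ is a $\lambda v^t\times k$ array over $V$ in which every set of $t$ consecutive columns contains every $t$-tuple exactly $\lambda$ times. It is simple if for any two distinct sets of $t$ consecutive columns sharing exactly $i$ columns ($0\le i\le t-1$), the subarray on the $2t-i$ columns of their union contains each $(2t-i)$-tuple at most once. *)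

From mathcomp Require Import all_boot.
Set Implicit Arguments. Unset Strict Implicit. Unset Printing Implicit Defensive.

Definition is_OA (lam t k v : nat) (V : finType)
    (A : 'I_(lam * v ^ t) -> 'I_k -> V) : Prop :=
  #|V| = v /\
  forall c : 'I_t -> 'I_k, injective c ->
  forall x : 'I_t -> V,
    #|[set r | [forall j, A r (c j) == x j]]| = lam.

Definition is_SSOA (lam t k v : nat) (V : finType)
    (A : 'I_(lam * v ^ t) -> 'I_k -> V) : Prop :=
  is_OA A /\
  forall c : 'I_t.+1 -> 'I_k, injective c ->
  forall x : 'I_t.+1 -> V,
    #|[set r | [forall j, A r (c j) == x j]]| <= 1.

Definition window (k t i : nat) : {set 'I_k} :=
  [set c : 'I_k | i <= c < i + t].

Definition occ (N k : nat) (V : finType) (A : 'I_N -> 'I_k -> V)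
    (S : {set 'I_k}) (x : 'I_k -> V) : nat :=
  #|[set r | [forall c in S, A r c == x c]]|.

(* The tuple on the
   window is given as the restriction of an arbitrary x : 'I_k -> V. *)
Definition is_COA (lam t k v : nat) (V : finType)
    (A : 'I_(lam * v ^ t) -> 'I_k -> V) : Prop :=
  #|V| = v /\
  forall i, i + t <= k -> forall x : 'I_k -> V, occ A (window k t i) x = lam.

Definition is_simple_COA (lam t k v : nat) (V : finType)
    (A : 'I_(lam * v ^ t) -> 'I_k -> V) : Prop :=
  is_COA A /\
  forall a b, a < b -> b + t <= k -> forall x : 'I_k -> V,
    occ A (window k t a :|: window k t b) x <= 1.

(* The array (A_1, ..., A_k, A_1, ..., A_{t-1}): column j of the new array is
   column (j mod k) of A. *)
Definition cyc_ext (N k t : nat) (V : finType) (hk : 0 < k)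
    (A : 'I_N -> 'I_k -> V) : 'I_N -> 'I_(k + t - 1) -> V :=
  fun r j => A r (Ordinal (ltn_pmod j hk)).

From mathcomp Require Import all_boot zify.

Set Implicit Arguments. Unset Strict Implicit. Unset Printing Implicit Defensive.

(* Column j of the cyclic extension B = (A_1,...,A_k,A_1,...,A_(t-1))
   is column (j mod k) of A.  Any set of t+1 columns of B lying in the union of
   two windows spans an arc of fewer than k positions, so folding them modulo k
   gives distinct columns of A; hence the rows of B agreeing with a tuple on
   those columns are exactly the rows of A agreeing with it on distinct columns.
   - A single window {i,...,i+t-1} folds onto t distinct columns of A, so the
     OA property gives exactly lam occurrences of every t-tuple (COA property).
   - The union of two windows a < b contains the t+1 columns a,...,a+t-1 and
     max(a+t, b), which fold onto t+1 distinct columns of A; super-simplicity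
     bounds the occurrences on these columns, hence on the union, by 1.
   The file first relates [occ] on a column set to agreement along an
   enumeration of (part of) that set, then proves that shifted offsets fold
   injectively, and finally derives the two properties of the extension. *)

Section Occurrences.
Variables (N K : nat) (V : finType) (B : 'I_N -> 'I_K -> V).

Definition rows_on n (s : 'I_n -> 'I_K) (x : 'I_K -> V) : {set 'I_N} :=
  [set r | [forall j, B r (s j) == x (s j)]].

Lemma occ_le_rows_on n (s : 'I_n -> 'I_K) (S : {set 'I_K}) x :
  (forall j, s j \in S) -> occ B S x <= #|rows_on s x|.
Proof.
move=> sS; apply/subset_leq_card/subsetP => r; rewrite !inE => /forall_inP agree.
by apply/forallP => j; apply: agree.
Qed.

Lemma occ_eq_rows_on n (s : 'I_n -> 'I_K) (S : {set 'I_K}) x :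
  (forall j, s j \in S) -> (forall c, c \in S -> exists j, c = s j) ->
  occ B S x = #|rows_on s x|.
Proof.
move=> sS onto; apply: eq_card => r; rewrite !inE.
by apply/forall_inP/forallP => [agree j | agree c /onto [j ->]]; apply: agree.
Qed.

End Occurrences.

Lemma modD_inj k a x y : (a + x) %% k = (a + y) %% k -> x < k -> y < k -> x = y.
Proof.
move/eqP; rewrite eqn_modDl => /eqP + x_lt y_lt.
by rewrite (modn_small x_lt) (modn_small y_lt).
Qed.

Section CyclicExtension.
Variables (t k v lam : nat) (V : finType) (hk : 0 < k).
Variable A : 'I_(lam * v ^ t) -> 'I_k -> V.

Definition fold_col K (j : 'I_K) : 'I_k := Ordinal (ltn_pmod j hk).

Lemma fold_shift_inj K n a (f : 'I_n -> nat) (s : 'I_n -> 'I_K) :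
  (forall m, s m = a + f m :> nat) -> injective f -> (forall m, f m < k) ->
  injective (fun m => fold_col (s m)).
Proof.
move=> sE f_inj f_lt m m' /(congr1 val) /=; rewrite !sE => /modD_inj eq_f.
exact/f_inj/eq_f.
Qed.

Let B := @cyc_ext _ k t V hk A.

Lemma cyc_ext_window_occ : t <= k -> is_OA A ->
  forall i, i + t <= k + t - 1 ->
  forall x, occ B (window (k + t - 1) t i) x = lam.
Proof.
move=> htk [_ OA] i hi x.
have col_lt (m : 'I_t) : i + m < k + t - 1 by have := ltn_ord m; lia.
pose s m := Ordinal (col_lt m).
have fold_inj : injective (fun m => fold_col (s m)).
  apply: (@fold_shift_inj _ _ i val) => // [m m' /val_inj // | m].
  exact: leq_trans (ltn_ord m) htk.
rewrite (@occ_eq_rows_on _ _ _ _ _ s); first exact: OA fold_inj _.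
  by move=> m; rewrite inE /=; have := ltn_ord m; lia.
move=> c; rewrite inE => /andP [c_ge c_lt]; have cm : c - i < t by lia.
by exists (Ordinal cm); apply: val_inj => /=; lia.
Qed.

Lemma cyc_ext_pair_occ : 0 < t -> t < k -> is_SSOA A ->
  forall a b, a < b -> b + t <= k + t - 1 ->
  forall x, occ B (window (k + t - 1) t a :|: window (k + t - 1) t b) x <= 1.
Proof.
move=> ht htk [_ SS] a b ab hb x.
(* Offsets from a: 0,...,t-1 cover window a; the last one reaches column
   max(a+t, b), which lies in window b, beyond window a, and within k of a. *)
pose off (m : 'I_t.+1) := if m < t then m : nat else maxn t (b - a).
have col_lt m : a + off m < k + t - 1.
  by rewrite /off; have := ltn_ord m; case: ifP => ?; lia.
pose s m := Ordinal (col_lt m).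
have off_inj : injective off.
  move=> m m'; rewrite /off; have := ltn_ord m; have := ltn_ord m'.
  by case: ifP => ?; case: ifP => ? ? ? eq_off; try apply: ord_inj; lia.
have off_lt m : off m < k by rewrite /off; have := ltn_ord m; case: ifP => ?; lia.
have fold_inj := @fold_shift_inj _ _ a off s (fun m => erefl) off_inj off_lt.
apply: leq_trans (SS _ fold_inj (fun m => x (s m))).
apply: occ_le_rows_on => m; rewrite !inE /= /off.
by have := ltn_ord m; case: ifP => ?; lia.
Qed.

End CyclicExtension.

Theorem mainTheorem5 (t k v lam : nat) (V : finType)
    (ht : 1 <= t) (hk : t.+1 <= k) (hv : 2 <= v) (hlam : 1 <= lam)
    (A : 'I_(lam * v ^ t) -> 'I_k -> V) :
  is_SSOA A ->
  (exists B : 'I_(lam * v ^ t) -> 'I_(k + t - 1) -> V, is_simple_COA B) /\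
  is_simple_COA (@cyc_ext _ k t V (leq_trans (ltn0Sn t) hk) A).
Proof.
move=> ssoa; have [oa _] := ssoa.
set B := @cyc_ext _ k t V _ A.
have simple_B : is_simple_COA B.
  split; first split.
  - by case: oa.
  - exact: cyc_ext_window_occ _ (ltnW hk) oa.
  - exact: cyc_ext_pair_occ _ ht hk ssoa.
by split => //; exists B.
Qed.
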